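(* Let $n\ge2$ and $g\in G$. Consider the linear maps $\mathcal{R},\mathcal{S}:\mathfrak{n}\to\mathbb{R}^{n-1}$ where $\mathcal{R}(X)$ is the vector of the last $n-1$ entries of the first row of $gXg^{-1}$ and $\mathcal{S}(X)$ is the vector of the last $n-1$ entries of the second row of $gXg^{-1}$. Then at least one of $\mathcal{R}$, $\mathcal{S}$ is invertible.
   Context: $G=\mathrm{SO}(1,n)$ realized as the group of $g\in\mathrm{SL}_{n+1}(\mathbb{R})$ with $g\begin{pmatrix}J&0\\0&I_{n-1}\end{pmatrix}g^T=\begin{pmatrix}J&0\\0&I_{n-1}\end{pmatrix}$, $J=\begin{pmatrix}0&1\\1&0\end{pmatrix}$ (the special isometry group of $2x_0x_1+x_2^2+\dots+x_n^2$). Its Lie algebra consists of block matrices $\begin{pmatrix}a&b\\c&d\end{pmatrix}$ with $a\in\mathbb{R}\,\mathrm{diag}(1,-1)$, $b\in M_{2\times(n-1)}(\mathbb{R})$ arbitrary, $c=-b^TJ$, $d=-d^T$. $\mathfrak{n}$ is the abelian subalgebra of elements $X(R)=\begin{pmatrix}0&b\\c&0\end{pmatrix}$ with $b=\begin{pmatrix}R\\0\end{pmatrix}$, $R\in M_{1\times(n-1)}(\mathbb{R})$, $c=-b^TJ$. *)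

From HB Require Import structures.
From mathcomp Require Import all_boot all_order all_algebra.
From mathcomp Require Import reals.
Set Implicit Arguments. Unset Strict Implicit. Unset Printing Implicit Defensive.
Import Order.TTheory GRing.Theory Num.Theory.
Local Open Scope ring_scope.

(* Work with n = m + 1, i.e. m = n - 1; matrices are (2 + m) x (2 + m). *)
Section SO1n.
Variable R : realType.
Variable m : nat.

Definition Jmx : 'M[R]_2 := \matrix_(i < 2, j < 2) (i != j)%:R.

(* the form  2 x0 x1 + x2^2 + ... + xn^2 :  diag(J, I_{n-1}) *)
Definition Qmx : 'M[R]_(2 + m) := block_mx Jmx 0 0 1%:M.

Definition inG (g : 'M[R]_(2 + m)) : Prop :=
  g *m Qmx *m g^T = Qmx /\ \det g = 1.

Definition bmx (r : 'rV[R]_m) : 'M[R]_(2, m) := col_mx r 0.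

(* X(R) = [[0, b], [c, 0]] with c = - b^T J ; elements of the abelian subalgebra n *)
Definition Xn (r : 'rV[R]_m) : 'M[R]_(2 + m) :=
  block_mx 0 (bmx r) (- ((bmx r)^T *m Jmx)) 0.

Definition conjX (g : 'M[R]_(2 + m)) (r : 'rV[R]_m) : 'M[R]_(2 + m) :=
  g *m Xn r *m invmx g.

Definition Rmap (g : 'M[R]_(2 + m)) (r : 'rV[R]_m) : 'rV[R]_m :=
  \row_(j < m) conjX g r (lshift m (0 : 'I_2)) (rshift 2 j).

Definition Smap (g : 'M[R]_(2 + m)) (r : 'rV[R]_m) : 'rV[R]_m :=
  \row_(j < m) conjX g r (lshift m (1 : 'I_2)) (rshift 2 j).

End SO1n.

From HB Require Import structures.
From mathcomp Require Import all_boot all_order all_algebra.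
From mathcomp Require Import reals.
From mathcomp Require Import ring.
Set Implicit Arguments. Unset Strict Implicit. Unset Printing Implicit Defensive.
Import Order.TTheory GRing.Theory Num.Theory.
Local Open Scope ring_scope.

(* Let B be the bilinear form of Q, a := g e_0 and x := g (0, R)^T. Since
   X(R) Q = e_0 (0, R) - (0, R)^T e_0^T and g^-1 = Q g^T Q, the c-th row map is
   R |-> (a_c x_j - x_c a_j)_j. As g preserves B, a is isotropic, B(x, a) = 0
   and B(x, x) = |R|^2. An isotropic vector vanishing on both head coordinates
   is zero, so a_c <> 0 for some c. If R lies in the kernel of the c-th map,
   y := a_c x - x_c a vanishes outside one head coordinate, hence is isotropic,
   while B(y, y) = a_c^2 |R|^2; so R = 0. *)

Lemma ord2_cases (c : 'I_2) : c = 0 \/ c = 1.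
Proof. by case: c => [[|[|c]] hc] //; [left | right]; apply/val_inj. Qed.

Section QuadraticForm.
Variables (R : realType) (m : nat).

Lemma Jmx_sqr : Jmx R *m Jmx R = 1%:M.
Proof.
apply/matrixP=> i j; rewrite !mxE !big_ord_recr big_ord0 /= !mxE.
by case: i => [[|[|i]] Hi] //; case: j => [[|[|j]] Hj] //=;
  rewrite ?mul0r ?mulr0 ?mul1r ?add0r ?addr0.
Qed.

Lemma trmx_Jmx : (Jmx R)^T = Jmx R.
Proof. by apply/matrixP=> i j; rewrite !mxE eq_sym. Qed.

Lemma Qmx_sqr : Qmx R m *m Qmx R m = 1%:M.
Proof.
rewrite /Qmx mulmx_block !mulmx0 !mul0mx !addr0 !add0r mulmx1 Jmx_sqr.
by rewrite -scalar_mx_block.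
Qed.

Lemma trmx_Qmx : (Qmx R m)^T = Qmx R m.
Proof. by rewrite /Qmx tr_block_mx trmx_Jmx !trmx0 trmx1. Qed.

Lemma mulmxQ_rshift k (Z : 'M[R]_(k, 2 + m)) i j :
  (Z *m Qmx R m) i (rshift 2 j) = Z i (rshift 2 j).
Proof.
by rewrite -[Z]hsubmxK /Qmx mul_row_block !mulmx0 add0r mulmx1 !row_mxEr.
Qed.

Definition qform (p q : 'cV[R]_(2 + m)) : R := (p^T *m Qmx R m *m q) 0 0.

Lemma qformC p q : qform p q = qform q p.
Proof.
have tr : (p^T *m Qmx R m *m q)^T = q^T *m Qmx R m *m p.
  by rewrite !trmx_mul trmxK trmx_Qmx mulmxA.
by rewrite /qform -tr [RHS]mxE.
Qed.

Lemma qformDl p q w : qform (p + q) w = qform p w + qform q w.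
Proof. by rewrite /qform linearD /= !mulmxDl mxE. Qed.

Lemma qformZl c p w : qform (c *: p) w = c * qform p w.
Proof. by rewrite /qform linearZ /= -!scalemxAl mxE. Qed.

Lemma qform_comb s t p q :
  qform (s *: p + t *: q) (s *: p + t *: q) =
  s ^+ 2 * qform p p + 2 * s * t * qform p q + t ^+ 2 * qform q q.
Proof.
rewrite !qformDl !qformZl [qform _ (s *: p + _)]qformC [qform _ (s *: p + _)]qformC.
by rewrite !qformDl !qformZl [qform q p]qformC; ring.
Qed.

Lemma qform_selfE (p : 'cV[R]_(2 + m)) :
  qform p p = 2 * p (lshift m 0) 0 * p (lshift m 1) 0
              + \sum_(j < m) p (rshift 2 j) 0 ^+ 2.
Proof.
rewrite /qform -[p]vsubmxK tr_col_mx /Qmx mul_row_block !mulmx0 addr0 add0r.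
rewrite mulmx1 mul_row_col !col_mxEu !mxE !big_ord_recr !big_ord0 /= !mxE.
rewrite !big_ord_recr !big_ord0 /= !mxE.
have -> : widen_ord (leqnSn 1) ord_max = 0 :> 'I_2 by apply/val_inj.
have -> : (ord_max : 'I_2) = 1 by apply/val_inj.
congr (_ + _); first by rewrite /=; ring.
by apply: eq_bigr => j _; rewrite vsubmxK !mxE expr2.
Qed.

Lemma qform_eq0_tail0 (p : 'cV[R]_(2 + m)) c :
  (forall j, p (rshift 2 j) 0 = 0) -> p (lshift m c) 0 = 0 -> qform p p = 0.
Proof.
move=> tail0 pc0; rewrite qform_selfE big1 ?addr0; last by move=> j _; rewrite tail0 expr0n.
by case: (ord2_cases c) pc0 => -> ->; rewrite !(mulr0, mul0r).
Qed.

Lemma isotropic_head0 (p : 'cV[R]_(2 + m)) :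
  qform p p = 0 -> p (lshift m 0) 0 = 0 -> p (lshift m 1) 0 = 0 -> p = 0.
Proof.
rewrite qform_selfE => + p0 p1; rewrite p0 p1 !mulr0 add0r => sq0.
have tail0 j : p (rshift 2 j) 0 = 0.
  by apply/eqP; rewrite -sqrf_eq0; apply/eqP/(psumr_eq0P _ sq0) => // k _; exact: sqr_ge0.
apply/matrixP => i k; rewrite ord1 mxE.
case: (split_ordP i) => [c ->|j ->]; last exact: tail0.
by case: (ord2_cases c) => ->.
Qed.

Definition e0col : 'cV[R]_(2 + m) := col_mx (col_mx (1%:M : 'M_1) (0 : 'M_1)) 0.
Definition tailcol (r : 'rV[R]_m) : 'cV[R]_(2 + m) := col_mx 0 r^T.

Lemma e0col_lshift (c : 'I_2) : e0col (lshift m c) 0 = (c == 0)%:R.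
Proof.
by rewrite /e0col col_mxEu; case: (ord2_cases c) => ->; rewrite mxE;
  case: splitP => i; rewrite ord1 mxE.
Qed.

Lemma qform_e0col : qform e0col e0col = 0.
Proof.
apply: (qform_eq0_tail0 (c := 1)); last by rewrite e0col_lshift.
by move=> j; rewrite /e0col col_mxEd mxE.
Qed.

Lemma qform_tailcol_e0col r : qform (tailcol r) e0col = 0.
Proof.
rewrite /qform /tailcol /e0col tr_col_mx trmx0 trmxK /Qmx mul_row_block.
by rewrite !mul0mx !mulmx0 !add0r mulmx1 mul_row_col mul0mx mulmx0 addr0 mxE.
Qed.

Lemma tailcol_lshift r c : tailcol r (lshift m c) 0 = 0.
Proof. by rewrite /tailcol col_mxEu mxE. Qed.

Lemma tailcol_rshift r j : tailcol r (rshift 2 j) 0 = r 0 j.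
Proof. by rewrite /tailcol col_mxEd mxE. Qed.

Lemma tailcol_eq0 r : tailcol r = 0 -> r = 0.
Proof. by move/(congr1 dsubmx); rewrite col_mxKd linear0 => /(congr1 trmx); rewrite trmxK trmx0. Qed.

Lemma Xn_mulmxQ r : Xn r *m Qmx R m = e0col *m (tailcol r)^T - tailcol r *m e0col^T.
Proof.
rewrite /Xn /Qmx mulmx_block !mulmx0 !mul0mx !addr0 !add0r mulmx1.
rewrite /e0col /tailcol !tr_col_mx !trmx0 trmxK !mul_col_row !mulmx0 !mul0mx.
rewrite opp_block_mx !oppr0 add_block_mx !addr0 !add0r /bmx.
have e0r : col_mx (1%:M : 'M_1) (0 : 'M_1) *m r = col_mx r 0.
  by rewrite (mul_col_mx (1%:M : 'M_1)) mul1mx mul0mx.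
by rewrite -[in RHS]trmx_mul e0r mulNmx -mulmxA Jmx_sqr mulmx1.
Qed.

End QuadraticForm.

Lemma bij_mulmx_of_ker (F : fieldType) n (M : 'M[F]_n) :
  (forall r : 'rV[F]_n, r *m M = 0 -> r = 0) -> bijective (fun r : 'rV[F]_n => r *m M).
Proof.
move=> ker0; have uM : M \in unitmx.
  rewrite -row_free_unit -kermx_eq0; apply/eqP/row_matrixP => i; rewrite row0.
  by apply: ker0; apply/sub_kermxP; exact: row_sub.
by exists (fun r => r *m invmx M) => r /=; [rewrite mulmxK | rewrite mulmxKV].
Qed.

Section Conjugation.
Variables (R : realType) (m : nat) (g : 'M[R]_(2 + m)).
Hypothesis hg : inG g.

Local Notation Q := (Qmx R m).
Local Notation a := (g *m e0col R m).
Local Notation x r := (g *m tailcol r).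

Lemma unitmx_G : g \in unitmx.
Proof. by case: hg => _ detg; rewrite unitmxE detg unitr1. Qed.

Lemma invmx_G : invmx g = Q *m g^T *m Q.
Proof.
have gK : g *m (Q *m g^T *m Q) = 1%:M by rewrite !mulmxA (proj1 hg) Qmx_sqr.
by rewrite -[invmx g]mulmx1 -gK (mulmxA (invmx g)) mulVmx ?unitmx_G // mul1mx.
Qed.

Lemma trmx_G_Q : g^T *m Q *m g = Q.
Proof.
have : Q *m g^T *m Q *m g = 1%:M by rewrite -invmx_G mulVmx ?unitmx_G.
by move/(congr1 (mulmx Q)); rewrite !mulmxA Qmx_sqr mul1mx mulmx1.
Qed.

Lemma qform_G p q : qform (g *m p) (g *m q) = qform p q.
Proof. by rewrite /qform trmx_mul -!mulmxA (mulmxA g^T) (mulmxA (g^T *m _)) trmx_G_Q. Qed.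

Lemma conjX_mulmxQ r : conjX g r *m Q = a *m (x r)^T - x r *m a^T.
Proof.
rewrite /conjX invmx_G -!mulmxA Qmx_sqr mulmx1 (mulmxA (Xn r)) Xn_mulmxQ.
by rewrite mulmxBl mulmxBr !trmx_mul !mulmxA.
Qed.

Lemma conjX_lshift_rshift r c j :
  conjX g r (lshift m c) (rshift 2 j) =
  a (lshift m c) 0 * x r (rshift 2 j) 0 - x r (lshift m c) 0 * a (rshift 2 j) 0.
Proof. by rewrite -mulmxQ_rshift conjX_mulmxQ !mxE !big_ord1 !mxE. Qed.

Lemma tailcol_mulmx r k : x r k 0 = \sum_(l < m) g k (rshift 2 l) * r 0 l.
Proof.
rewrite mxE big_split_ord /= big1 ?add0r => [|i _]; last by rewrite tailcol_lshift mulr0.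
by apply: eq_bigr => l _; rewrite tailcol_rshift.
Qed.

Definition conj_rowmx c : 'M[R]_m :=
  \matrix_(l, j) (a (lshift m c) 0 * g (rshift 2 j) (rshift 2 l)
                  - g (lshift m c) (rshift 2 l) * a (rshift 2 j) 0).

Lemma conj_row_mulmx c r :
  \row_j conjX g r (lshift m c) (rshift 2 j) = r *m conj_rowmx c.
Proof.
apply/rowP => j; rewrite [RHS]mxE [LHS]mxE conjX_lshift_rshift !tailcol_mulmx.
rewrite mulr_sumr mulr_suml -sumrB; apply: eq_bigr => l _.
by rewrite [conj_rowmx c _ _]mxE; ring.
Qed.

Lemma conj_row_eq0 c r : a (lshift m c) 0 != 0 ->
  (forall j, conjX g r (lshift m c) (rshift 2 j) = 0) -> r = 0.
Proof.
move=> ac0 row0; set ac := a (lshift m c) 0; set xc := x r (lshift m c) 0.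
have y_entry k : (ac *: x r + (- xc) *: a) k 0 = ac * x r k 0 - xc * a k 0.
  by rewrite [LHS]mxE [X in X + _]mxE [X in _ + X]mxE mulNr.
have y_tail j : (ac *: x r + (- xc) *: a) (rshift 2 j) 0 = 0.
  by rewrite y_entry -(row0 j) conjX_lshift_rshift.
have y_c : (ac *: x r + (- xc) *: a) (lshift m c) 0 = 0.
  by rewrite y_entry mulrC subrr.
have := qform_eq0_tail0 y_tail y_c.
rewrite qform_comb !qform_G qform_e0col qform_tailcol_e0col !mulr0 !addr0.
move/eqP; rewrite mulf_eq0 expf_eq0 /= (negbTE ac0) /= => /eqP qr0.
apply: tailcol_eq0; apply: isotropic_head0 qr0 _ _; exact: tailcol_lshift.
Qed.

Lemma conj_row_bij c : a (lshift m c) 0 != 0 ->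
  bijective (fun r => \row_j conjX g r (lshift m c) (rshift 2 j)).
Proof.
move=> ac0; apply: (eq_bij (bij_mulmx_of_ker _)) => [r rM0|r]; last exact/esym/conj_row_mulmx.
apply: (conj_row_eq0 ac0) => j.
by move/rowP/(_ j): rM0; rewrite -conj_row_mulmx !mxE.
Qed.

End Conjugation.

Theorem lemma6 (R : realType) (m : nat) (hm : (1 <= m)%N)
  (g : 'M[R]_(2 + m)) (hg : inG g) :
  bijective (Rmap g) \/ bijective (Smap g).
Proof.
set a := g *m e0col R m.
have a_iso : qform a a = 0 by rewrite qform_G // qform_e0col.
have [a0|a0] := eqVneq (a (lshift m 0) 0) 0; last by left; exact: conj_row_bij.
have [a1|a1] := eqVneq (a (lshift m 1) 0) 0; last by right; exact: conj_row_bij.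
have := isotropic_head0 a_iso a0 a1.
move/(congr1 (mulmx (invmx g))); rewrite mulmxA mulVmx ?unitmx_G // mul1mx mulmx0.
by move/matrixP/(_ (lshift m 0) 0); rewrite e0col_lshift mxE eqxx => /eqP; rewrite oner_eq0.
Qed.
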